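(* For each $q\in\{1,\dots,s\}$ and $j_1,j_2\ge0$, $$H_{p_{j_1}p_{j_2}}(\zeta)=\sum_{\substack{p\equiv q\ (\mathrm{mod}\ s)\\ 1\le p\le\min\{p_{j_1},p_{j_2}\}}}v^{(p)}_{j_1}\,\overline{v^{(p)}_{j_2}},\qquad v^{(p)}_j=\begin{cases}\frac{p_j}{\sqrt p}R_p\bigl(\frac{p_j-p}{s};\zeta\bigr),& p_j\ge p,\\ 0,&\text{otherwise},\end{cases}$$ where $p_j=q+js$ (a finite sum). More precisely, $H_{p+ks,\,p+\ell s}=\frac{(p+ks)(p+\ell s)}{p}R_p(k;\zeta)\overline{R_p(\ell;\zeta)}$ summed over admissible $p$.
   Context: Fix integers $N\ge1$ and $2\le s_1<\dots<s_N$; put $s=\gcd(s_1,\dots,s_N)$. For $\zeta\in\mathbb C^N$ let $U(x;\zeta)$ be the unique germ analytic at $x=0$ with $U(0;\zeta)=1$ and $U=1+\sum_{n=1}^N\zeta_nx^{s_n}U^{s_n}$; it depends on $x$ only through $x^s$, and $U(x;\zeta)^p=\sum_{m\ge0}R_p(m;\zeta)x^{ms}$. Define $K(x,\bar x';\zeta)=\log\bigl(1-x\bar x'U(x;\zeta)\overline{U(x';\zeta)}\bigr)$ as a power series in the independent variables $x,\bar x'$, and $H_{mn}(\zeta)=-mn\,[x^m][\bar x'^n]K$, $m,n\ge1$. *)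

(* Complex numbers are R[i] = complex R for R : rcfType
   (mathcomp-real-closed); the usual C is the instance R = reals. *)
From HB Require Import structures.
From mathcomp Require Import all_boot all_order all_algebra.
From mathcomp Require Export complex.
Set Implicit Arguments. Unset Strict Implicit. Unset Printing Implicit Defensive.
Import Order.TTheory GRing.Theory Num.Theory.
Local Open Scope ring_scope.

Section Series.
Variable C : numClosedFieldType.

(** Formal power series in one variable: coefficient sequences nat -> C. *)
Definition sone : nat -> C := fun k => (k == 0%N)%:R.
Definition smul (a b : nat -> C) : nat -> C :=
  fun k => \sum_(i < k.+1) a i * b (k - i)%N.
Definition spow (a : nat -> C) (p : nat) : nat -> C := iter p (smul a) sone.

(** The defining equation of U(x;zeta):
    U = 1 + sum_n zeta_n x^{s_n} U^{s_n}, U(0) = 1, as a formal power series.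
    (The analytic germ's Taylor series is the unique formal solution.) *)
Definition is_U (N : nat) (sd : 'I_N -> nat) (zeta : 'I_N -> C)
    (u : nat -> C) : Prop :=
  u 0%N = 1 /\
  forall k, u k = sone k +
    \sum_(n < N) zeta n * (if (sd n <= k)%N then spow u (sd n) (k - sd n)%N else 0).

Definition sgcd (N : nat) (sd : 'I_N -> nat) : nat := \big[gcdn/0%N]_(n < N) sd n.

Definition Rcoef (u : nat -> C) (s p m : nat) : C := spow u p (m * s)%N.

(** Formal power series in two independent variables x, y (y stands for
    conj(x')): coefficient arrays nat -> nat -> C. *)
Definition bone : nat -> nat -> C := fun i j => ((i == 0%N) && (j == 0%N))%:R.
Definition bmul (a b : nat -> nat -> C) : nat -> nat -> C :=
  fun m n => \sum_(i < m.+1) \sum_(j < n.+1) a i j * b (m - i)%N (n - j)%N.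
Definition bpow (a : nat -> nat -> C) (p : nat) : nat -> nat -> C :=
  iter p (bmul a) bone.

(** Formal logarithm of F with F(0,0) = 1:
    log F = - sum_{p>=1} (1 - F)^p / p.  Since (1-F)^p has no monomials of
    total degree < p, the coefficient of x^m y^n only involves p <= m + n. *)
Definition blog (F : nat -> nat -> C) : nat -> nat -> C :=
  fun m n => - \sum_(1 <= p < (m + n).+1)
                 bpow (fun i j => bone i j - F i j) p m n / p%:R.

(** x y U(x) conj(U)(y), where conj(U)(y) = sum_k conj(u_k) y^k. *)
Definition Wser (u : nat -> C) : nat -> nat -> C :=
  fun i j => if (0 < i)%N && (0 < j)%N then u i.-1 * (u j.-1)^* else 0.

Definition Kser (u : nat -> C) : nat -> nat -> C :=
  blog (fun i j => bone i j - Wser u i j).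

Definition Hmat (u : nat -> C) (m n : nat) : C :=
  - ((m * n)%N%:R * Kser u m n).

Definition vvec (u : nat -> C) (s q j p : nat) : C :=
  let pj := (q + j * s)%N in
  if (p <= pj)%N then pj%:R / sqrtC (p%:R) * Rcoef u s p ((pj - p) %/ s)
  else 0.

End Series.

(* Writing W = x y U(x) conj(U)(y) = (xU)(x) * conj(xU)(y), a product of a series in x and a
   series in y, the logarithm gives K = log(1 - W) = - sum_p W^p / p and
   [x^m][y^n] W^p = [x^(m-p)]U^p * conj([x^(n-p)]U^p), hence
   H_mn = sum_(1 <= p <= min m n) (m n / p) [x^(m-p)]U^p conj([x^(n-p)]U^p).
   Since U is a series in x^s, [x^(m-p)]U^p vanishes unless s divides m - p; for
   m = q + j s this keeps exactly the p congruent to q mod s, with m - p = k s. *)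
From HB Require Import structures.
From mathcomp Require Import all_boot all_order all_algebra.
From mathcomp Require Import complex.
From Stdlib Require Import FunctionalExtensionality.
From mathcomp Require Import zify ring.
Import Order.TTheory GRing.Theory Num.Theory.
Local Open Scope ring_scope.

Section FormalSeries.
Variable C : numClosedFieldType.
Implicit Types (a b f g u : nat -> C) (p k : nat).

Definition sshift a : nat -> C := fun k => if k is k'.+1 then a k' else 0.
Definition sconj a : nat -> C := fun k => (a k)^*.
Definition btens f g : nat -> nat -> C := fun i j => f i * g j.

Lemma smul_sshiftl a b : smul (sshift a) b = sshift (smul a b).
Proof.
apply: functional_extensionality => -[|k]; rewrite /smul /=.
  by rewrite big_ord_recl big_ord0 /= mul0r addr0.
by rewrite big_ord_recl /= mul0r add0r; apply: eq_bigr => i _; rewrite subSS.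
Qed.

Lemma smul_sshiftr a b : smul a (sshift b) = sshift (smul a b).
Proof.
apply: functional_extensionality => -[|k]; rewrite /smul /=.
  by rewrite big_ord_recl big_ord0 /= mulr0 addr0.
rewrite big_ord_recr /= subnn mulr0 addr0; apply: eq_bigr => i _ /=.
by rewrite subSn // -ltnS ltn_ord.
Qed.

Lemma iter_sshiftE a p k :
  iter p sshift a k = if (p <= k)%N then a (k - p)%N else 0.
Proof.
by elim: p k => [|p IH] [|k] //=; rewrite ?subn0 // IH ltnS subSS.
Qed.

Lemma smul_iter_sshiftr a b p : smul a (iter p sshift b) = iter p sshift (smul a b).
Proof. by elim: p => [|p IH] //=; rewrite smul_sshiftr IH. Qed.

Lemma spow_sshift a p : spow (sshift a) p = iter p sshift (spow a p).
Proof.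
elim: p => [|p IH] //.
by rewrite /spow /= -/(spow _ p) IH smul_sshiftl smul_iter_sshiftr.
Qed.

Lemma spow_sshiftE a p k :
  spow (sshift a) p k = if (p <= k)%N then spow a p (k - p) else 0.
Proof. by rewrite spow_sshift iter_sshiftE. Qed.

Lemma spow_sconj a p : spow (sconj a) p = sconj (spow a p).
Proof.
elim: p => [|p IH]; apply: functional_extensionality => k.
  by rewrite /spow /= /sconj /sone rmorph_nat.
rewrite /spow /= -!/(spow _ p) IH /smul /sconj rmorph_sum.
by apply: eq_bigr => i _; rewrite rmorphM.
Qed.

Lemma bmul_btens f g f' g' :
  bmul (btens f g) (btens f' g') = btens (smul f f') (smul g g').
Proof.
apply: functional_extensionality => m; apply: functional_extensionality => n.
rewrite /bmul /btens /smul big_distrl; apply: eq_bigr => i _.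
by rewrite big_distrr; apply: eq_bigr => j _; rewrite mulrACA.
Qed.

Lemma bpow_btens f g p : bpow (btens f g) p = btens (spow f p) (spow g p).
Proof.
elim: p => [|p IH]; last by rewrite /bpow /= -!/(bpow _ p) IH bmul_btens.
apply: functional_extensionality => i; apply: functional_extensionality => j.
by rewrite /bpow /btens /= /bone /sone -natrM mulnb.
Qed.

Lemma Wser_btens u : Wser u = btens (sshift u) (sconj (sshift u)).
Proof.
apply: functional_extensionality => -[|i]; apply: functional_extensionality => -[|j];
by rewrite /Wser /btens /sconj /= ?rmorph0 ?mul0r ?mulr0.
Qed.

Lemma Kser_spow u m n :
  Kser u m n = - \sum_(1 <= p < (m + n).+1)
    spow (sshift u) p m * (spow (sshift u) p n)^* / p%:R.
Proof.
rewrite /Kser /blog.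
have -> : (fun i j => bone C i j - (bone C i j - Wser u i j)) = Wser u.
  apply: functional_extensionality => i; apply: functional_extensionality => j.
  by rewrite opprB addrC subrK.
rewrite Wser_btens; congr (- _); apply: eq_bigr => p _.
by rewrite bpow_btens spow_sconj.
Qed.

Lemma Hmat_spow u m n :
  Hmat u m n = \sum_(1 <= p < (minn m n).+1)
    (m * n)%:R / p%:R * spow u p (m - p) * (spow u p (n - p))^*.
Proof.
rewrite /Hmat Kser_spow mulrN opprK mulr_sumr.
rewrite (big_cat_nat _ (n := (minn m n).+1)) //=; last first.
  by rewrite ltnS (leq_trans (geq_minl _ _) (leq_addr _ _)).
rewrite [X in _ + X]big_nat_cond [X in _ + X]big1 ?addr0; last first.
  move=> p /andP[/andP[+ _] _]; rewrite ltnNge leq_min negb_and.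
  by case/orP => /negbTE hp; rewrite !spow_sshiftE hp ?(mul0r, mulr0, rmorph0).
apply: eq_big_nat => p /andP[_]; rewrite ltnS leq_min => /andP[pm pn].
by rewrite !spow_sshiftE pm pn; ring.
Qed.

Lemma spow_coef_eq0 (s B : nat) a :
    (forall k, (k <= B)%N -> ~~ (s %| k)%N -> a k = 0) ->
  forall p k, (k <= B)%N -> ~~ (s %| k)%N -> spow a p k = 0.
Proof.
move=> a0; elim=> [|p IH] k kB sk.
  by rewrite /spow /= /sone; case: k kB sk => [|k] //=; rewrite dvdn0.
rewrite /spow /= -/(spow a p) /smul big1 // => i _.
have ik : (i <= k)%N by rewrite -ltnS.
have [si|si] := boolP (s %| i)%N; last by rewrite a0 ?mul0r // (leq_trans ik).
rewrite IH ?mulr0 //; first exact: leq_trans (leq_subr _ _) kB.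
by apply: contra sk => h; rewrite -(subnK ik) dvdn_add.
Qed.

End FormalSeries.

Lemma sgcd_dvd N (sd : 'I_N -> nat) n : (sgcd sd %| sd n)%N.
Proof. by rewrite /sgcd (bigD1 n) //= dvdn_gcdl. Qed.

(* The equation for U only involves lower coefficients of u since every s_n > 0,
   so strong induction on k applies. *)
Lemma is_U_coef_eq0 (C : numClosedFieldType) N (sd : 'I_N -> nat)
    (zeta : 'I_N -> C) u :
    (forall n, (0 < sd n)%N) -> is_U sd zeta u ->
  forall k, ~~ (sgcd sd %| k)%N -> u k = 0.
Proof.
move=> sd_gt0 [_ uE] k; elim: k {-2}k (leqnn k) => [|K IH] k kK sk.
  by move: kK; rewrite leqn0 => /eqP k0; rewrite k0 dvdn0 in sk.
have k0 : k != 0%N by apply: contraNneq sk => ->; rewrite dvdn0.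
rewrite uE /sone (negbTE k0) add0r big1 // => n _.
case: ifP => h; last by rewrite mulr0.
rewrite (@spow_coef_eq0 _ (sgcd sd) K u) ?mulr0 //.
- by have := sd_gt0 n; lia.
- by apply: contra sk => hd; rewrite -(subnK h) dvdn_add // sgcd_dvd.
Qed.

Lemma modn_eq_dvd_sub (s q j p : nat) : (p <= q + j * s)%N ->
  (p %% s == q %% s)%N = (s %| (q + j * s) - p)%N.
Proof. by move=> pm; rewrite -eqn_mod_dvd // eq_sym addnC modnMDl. Qed.

Lemma vvec_mul_conj (R : rcfType) (u : nat -> R[i]) (s q j1 j2 p : nat) :
    (0 < p)%N -> (p <= q + j1 * s)%N -> (p <= q + j2 * s)%N ->
    (p %% s == q %% s)%N ->
  vvec u s q j1 p * (vvec u s q j2 p)^* =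
    ((q + j1 * s) * (q + j2 * s))%:R / p%:R *
      spow u p (q + j1 * s - p) * (spow u p (q + j2 * s - p))^*.
Proof.
move=> p0 pm pn pq.
rewrite /vvec /Rcoef /= pm pn !divnK -?modn_eq_dvd_sub //.
have r2 : sqrtC (p%:R : R[i]) ^+ 2 = p%:R by rewrite sqrtCK.
have r0 : sqrtC (p%:R : R[i]) != 0.
  by rewrite sqrtC_eq0 pnatr_eq0 -lt0n p0.
have conjM (x y : R[i]) : (x * y)^* = x^* * y^* by rewrite rmorphM.
rewrite natrM !conjM conjC_nat (geC0_conj (x := _^-1)) ?invr_ge0 ?sqrtC_ge0 ?ler0n //.
by move: r0 r2; set r := sqrtC _ => r0 <-; field.
Qed.

Theorem proposition2p7 (R : rcfType) (N : nat) (sd : 'I_N -> nat)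
    (zeta : 'I_N -> R[i]) (u : nat -> R[i]) (q j1 j2 : nat) :
  (1 <= N)%N ->
  (forall n, (2 <= sd n)%N) ->
  (forall n m : 'I_N, (n < m)%N -> (sd n < sd m)%N) ->
  is_U sd zeta u ->
  (1 <= q <= sgcd sd)%N ->
  let s := sgcd sd in
  Hmat u (q + j1 * s) (q + j2 * s) =
    \sum_(1 <= p < (minn (q + j1 * s) (q + j2 * s)).+1 | (p %% s == q %% s)%N)
      vvec u s q j1 p * (vvec u s q j2 p)^*.
Proof.
move=> _ sd_ge2 _ uU _ s.
have u_eq0 := @is_U_coef_eq0 _ _ _ _ _ (fun n => ltnW (sd_ge2 n)) uU.
rewrite Hmat_spow [RHS]big_mkcond /=; apply: eq_big_nat => p /andP[p0].
rewrite ltnS leq_min => /andP[pm pn].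
have [pq|pq] := ifP; first by rewrite vvec_mul_conj.
rewrite (@spow_coef_eq0 _ s (q + j1 * s - p) u) ?mulr0 ?mul0r //.
  by move=> k _; apply: u_eq0.
by rewrite -modn_eq_dvd_sub // pq.
Qed.
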